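(* Let $\mathcal T\subseteq\mathsf{mod}\Lambda$ be a functorially finite torsion class and let $\mathcal F\subseteq\mathsf{mod}\Lambda$ be a functorially finite torsion-free class. Then $\mathcal T\cap \mathcal F$ is functorially finite.
   Context: $\Lambda$ is a finite-dimensional algebra, $\mathsf{mod}\Lambda$ finitely generated left modules. A torsion class is a subcategory closed under extensions and quotients; a torsion-free class is one closed under extensions and submodules. A subcategory $\mathcal A$ is functorially finite if every $X\in\mathsf{mod}\Lambda$ admits a right $\mathcal A$-approximation $A_X\to X$ (every map from an object of $\mathcal A$ to $X$ factors through it) and a left $\mathcal A$-approximation $X\to A^X$ (every map from $X$ to an object of $\mathcal A$ factors through it), with $A_X,A^X\in\mathcal A$. *)

From HB Require Import structures.
From mathcomp Require Import all_boot all_algebra all_field.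
Set Implicit Arguments. Unset Strict Implicit. Unset Printing Implicit Defensive.
Import GRing.Theory.
Local Open Scope ring_scope.

(* A finitely generated left Lam-module = finite-dimensional F-vector space
   F^(mdim M) (row vectors) with action  a . v := v *m mact M a.
   Left module axiom a.(b.v) = (ab).v reads mact (a*b) = mact b *m mact a. *)
Record fmod (F : fieldType) (Lam : falgType F) := FMod {
  mdim : nat;
  mact : Lam -> 'M[F]_mdim;
  mact_lin : forall (k : F) (a b : Lam), mact (k *: a + b) = k *: mact a + mact b;
  mact1 : mact 1 = 1%:M;
  mactM : forall a b : Lam, mact (a * b) = mact b *m mact a
}.

(* F-linear maps X -> Y, as matrices acting on row vectors: x |-> x *m f. *)
Definition hom (F : fieldType) (Lam : falgType F) (X Y : fmod Lam) :=
  'M[F]_(mdim X, mdim Y).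

Definition is_hom (F : fieldType) (Lam : falgType F) (X Y : fmod Lam)
  (f : hom X Y) : Prop :=
  forall a : Lam, mact X a *m f = f *m mact Y a.

Definition subcat (F : fieldType) (Lam : falgType F) := fmod Lam -> Prop.

Definition closed_quot (F : fieldType) (Lam : falgType F) (C : subcat Lam) :=
  forall (X Y : fmod Lam) (g : hom X Y), is_hom g -> row_full g -> C X -> C Y.

Definition closed_sub (F : fieldType) (Lam : falgType F) (C : subcat Lam) :=
  forall (X Y : fmod Lam) (f : hom X Y), is_hom f -> row_free f -> C Y -> C X.

(* closed under extensions: for a short exact sequence 0 -> X -f-> Y -g-> Z -> 0
   (f injective, g surjective, im f = ker g), X, Z in C implies Y in C. *)
Definition closed_ext (F : fieldType) (Lam : falgType F) (C : subcat Lam) :=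
  forall (X Y Z : fmod Lam) (f : hom X Y) (g : hom Y Z),
    is_hom f -> is_hom g -> row_free f -> row_full g -> (f == kermx g)%MS ->
    C X -> C Z -> C Y.

Definition torsion_class (F : fieldType) (Lam : falgType F) (C : subcat Lam) :=
  closed_ext C /\ closed_quot C.

Definition torsionfree_class (F : fieldType) (Lam : falgType F) (C : subcat Lam) :=
  closed_ext C /\ closed_sub C.

(* composition of f : X -> Y and h : Y -> Z is f *m h (row-vector convention) *)
Definition right_approx (F : fieldType) (Lam : falgType F) (C : subcat Lam)
  (X A : fmod Lam) (f : hom A X) : Prop :=
  C A /\ is_hom f /\
  forall (B : fmod Lam) (g : hom B X), C B -> is_hom g ->
    exists h : hom B A, is_hom h /\ g = h *m f.

Definition left_approx (F : fieldType) (Lam : falgType F) (C : subcat Lam)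
  (X A : fmod Lam) (f : hom X A) : Prop :=
  C A /\ is_hom f /\
  forall (B : fmod Lam) (g : hom X B), C B -> is_hom g ->
    exists h : hom A B, is_hom h /\ g = f *m h.

Definition functorially_finite (F : fieldType) (Lam : falgType F) (C : subcat Lam) :=
  forall X : fmod Lam,
    (exists (A : fmod Lam) (f : hom A X), right_approx C f) /\
    (exists (A : fmod Lam) (f : hom X A), left_approx C f).

From Pilot Require Import Defs.
From mathcomp Require Import all_boot all_algebra all_field.
Set Implicit Arguments. Unset Strict Implicit. Unset Printing Implicit Defensive.
Import GRing.Theory.
Local Open Scope ring_scope.

(* If f : A -> X is a right F-approximation and t : B -> A a right
   T-approximation of A, then the image I of t is a quotient of B and a
   submodule of A, hence lies in T /\ F; and I -> A -> X is a right
   (T /\ F)-approximation, since a map from M in T /\ F to X factors through f,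
   then through t, hence through B ->> I.  Dually, for left approximations
   take X -> T^X -> F^(T^X) and the image of the second map. *)

Lemma is_hom_mul (F : fieldType) (Lam : falgType F) (X Y Z : fmod Lam)
    (f : Defs.hom X Y) (g : Defs.hom Y Z) :
  is_hom f -> is_hom g -> is_hom (f *m g : Defs.hom X Z).
Proof. by move=> hf hg a; rewrite mulmxA hf -mulmxA hg mulmxA. Qed.

Section ImageModule.
Variables (F : fieldType) (Lam : falgType F) (A Y : fmod Lam) (a : Defs.hom A Y).
Hypothesis ha : is_hom a.

(* The image of a is carried by the rows of [row_base a]; the action of Y is
   transported to it through the partial inverse [pinvmx]. *)
Definition image_act (x : Lam) : 'M[F]_(\rank a) :=
  row_base a *m mact Y x *m pinvmx (row_base a).

Lemma image_act_stable (x : Lam) : (row_base a *m mact Y x <= row_base a)%MS.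
Proof.
have /submxP[D {1}->] : (row_base a <= a)%MS by rewrite eq_row_base.
rewrite -mulmxA -ha mulmxA eq_row_base; exact: submxMl.
Qed.

Lemma image_actE k (u : 'M[F]_(k, \rank a)) (x : Lam) :
  u *m image_act x *m row_base a = u *m row_base a *m mact Y x.
Proof. by rewrite /image_act -mulmxA (mulmxKpV (image_act_stable x)) mulmxA. Qed.

Lemma image_act_lin (k : F) (x y : Lam) :
  image_act (k *: x + y) = k *: image_act x + image_act y.
Proof. by rewrite /image_act mact_lin mulmxDr mulmxDl -scalemxAr -scalemxAl. Qed.

Lemma image_act1 : image_act 1 = 1%:M.
Proof.
apply: (row_free_inj (row_base_free a)).
by rewrite -[image_act 1]mul1mx image_actE mact1 !mulmx1 mul1mx.
Qed.

Lemma image_actM (x y : Lam) : image_act (x * y) = image_act y *m image_act x.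
Proof.
apply: (row_free_inj (row_base_free a)).
rewrite -[image_act (x * y)]mul1mx image_actE mactM image_actE.
by rewrite -[image_act y]mul1mx image_actE !mul1mx mulmxA.
Qed.

Definition image_mod : fmod Lam := FMod image_act_lin image_act1 image_actM.

Definition image_proj : Defs.hom A image_mod := a *m pinvmx (row_base a).

Definition image_incl : Defs.hom image_mod Y := row_base a.

Lemma image_factor : image_proj *m image_incl = a.
Proof. by rewrite mulmxKpV // eq_row_base. Qed.

Lemma image_proj_hom : is_hom image_proj.
Proof.
move=> x; apply: (row_free_inj (row_base_free a)).
by rewrite /= image_actE image_factor -mulmxA image_factor ha.
Qed.

Lemma image_incl_hom : is_hom image_incl.
Proof. by move=> x; rewrite /= -[image_act x]mul1mx image_actE mul1mx. Qed.

Lemma image_proj_full : row_full image_proj.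
Proof.
by apply/eqP; rewrite -(mxrankMfree _ (row_base_free a)) image_factor.
Qed.

Lemma image_incl_free : row_free image_incl.
Proof. exact: row_base_free. Qed.

End ImageModule.

Section ApproxIntersection.
Variables (F : fieldType) (Lam : falgType F) (C D : subcat Lam).
Hypotheses (quotC : closed_quot C) (subD : closed_sub D).

Lemma image_in_quot_sub (A Y : fmod Lam) (a : Defs.hom A Y) (ha : is_hom a) :
  C A -> D Y -> C (image_mod ha) /\ D (image_mod ha).
Proof.
move=> CA DY; split.
- exact: quotC (image_proj_hom ha) (image_proj_full ha) CA.
- exact: subD (image_incl_hom ha) (image_incl_free ha) DY.
Qed.

Lemma right_approx_image (X A B : fmod Lam) (f : Defs.hom A X) (t : Defs.hom B A)
    (ht : is_hom t) :
  right_approx D f -> right_approx C t ->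
  right_approx (fun M => C M /\ D M) (image_incl ht *m f : Defs.hom _ X).
Proof.
move=> [DA [hf fP]] [CB [_ tP]]; split; last split.
- exact: image_in_quot_sub.
- exact: is_hom_mul (image_incl_hom ht) hf.
move=> M g [CM DM] hg.
have [h [hh ->]] := fP M g DM hg.
have [k [hk ->]] := tP M h CM hh.
exists (k *m image_proj ht); split; first exact: is_hom_mul hk (image_proj_hom ht).
by rewrite mulmxA -(mulmxA k (image_proj ht)) image_factor.
Qed.

Lemma left_approx_image (X A B : fmod Lam) (t : Defs.hom X A) (f : Defs.hom A B)
    (hf : is_hom f) :
  left_approx C t -> left_approx D f ->
  left_approx (fun M => C M /\ D M) (t *m image_proj hf : Defs.hom X _).
Proof.
move=> [CA [ht tP]] [DB [_ fP]]; split; last split.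
- exact: image_in_quot_sub.
- exact: is_hom_mul ht (image_proj_hom hf).
move=> M g [CM DM] hg.
have [h [hh ->]] := tP M g CM hg.
have [k [hk ->]] := fP M h DM hh.
exists (image_incl hf *m k); split; first exact: is_hom_mul (image_incl_hom hf) hk.
by rewrite -mulmxA (mulmxA (image_proj hf)) image_factor.
Qed.

End ApproxIntersection.

Theorem lemma2p1 (F : fieldType) (Lam : falgType F) (T Fr : subcat Lam) :
  torsion_class T -> functorially_finite T ->
  torsionfree_class Fr -> functorially_finite Fr ->
  functorially_finite (fun X => T X /\ Fr X).
Proof.
move=> [_ quotT] ffT [_ subFr] ffFr X; split.
- have [[FX [f appf]] _] := ffFr X.
  have [[TX [t appt]] _] := ffT FX.
  have ht := appt.2.1.
  by exists (image_mod ht), (image_incl ht *m f); exact: right_approx_image.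
- have [_ [TX [t appt]]] := ffT X.
  have [_ [FX [f appf]]] := ffFr TX.
  have hf := appf.2.1.
  by exists (image_mod hf), (t *m image_proj hf); exact: left_approx_image.
Qed.
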